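(* Let $G$ be a finite simple graph, let $I$ be a maximum critical independent set in $G$, and let $X=I\cup N(I)$. Then $\operatorname{diadem}(G)\subseteq \operatorname{diadem}(G[X])$ and $\operatorname{nucleus}(G[X])\subseteq \operatorname{nucleus}(G)$.
   Context: For a graph $H$ and $Y\subseteq V(H)$, $N_H(Y)$ is the set of vertices of $H$ adjacent to some vertex of $Y$, and $d_H(Y)=|Y|-|N_H(Y)|$. An independent set $S$ of $H$ is critical in $H$ if $d_H(S)=\max\{d_H(Y):Y\subseteq V(H)\}$; the empty set may be critical. A maximum critical independent set of $H$ is a critical independent set of $H$ of maximum cardinality. $\operatorname{nucleus}(H)$ and $\operatorname{diadem}(H)$ are, respectively, the intersection and the union of all maximum critical independent sets of $H$. $N(I)=N_G(I)$, and $G[X]$ is the subgraph of $G$ induced by $X$. *)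

(* A finite simple graph is a symmetric irreflexive relation
   e on a finType T. A graph H is represented by a vertex set V : {set T}
   together with the restriction of e to V; G itself is V = setT, and the
   induced subgraph G[X] is V = X. *)
From mathcomp Require Import all_boot all_order all_algebra.
Set Implicit Arguments. Unset Strict Implicit. Unset Printing Implicit Defensive.
Import Order.TTheory GRing.Theory Num.Theory.

Section Graphs.
Variables (T : finType) (e : rel T).

Definition nbhd (V Y : {set T}) : {set T} :=
  [set v in V | [exists y in Y, e y v]].

Definition dH (V Y : {set T}) : int := (#|Y|%:Z - #|nbhd V Y|%:Z)%R.

Definition independent (V S : {set T}) : bool :=
  (S \subset V) && [forall x in S, forall y in S, ~~ e x y].

Definition critical_indep (V S : {set T}) : bool :=
  independent V S &&
  [forall Y : {set T}, (Y \subset V) ==> (dH V Y <= dH V S)%R].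

Definition max_critical_indep (V S : {set T}) : bool :=
  critical_indep V S &&
  [forall S' : {set T}, critical_indep V S' ==> (#|S'| <= #|S|)].

Definition nucleus (V : {set T}) : {set T} :=
  [set v in V | [forall S : {set T}, max_critical_indep V S ==> (v \in S)]].

Definition diadem (V : {set T}) : {set T} :=
  [set v | [exists S : {set T}, max_critical_indep V S && (v \in S)]].

End Graphs.

From mathcomp Require Import all_boot all_order all_algebra.
From mathcomp Require Import zify.
Set Implicit Arguments. Unset Strict Implicit. Unset Printing Implicit Defensive.

(* Criticality of I yields a Hall condition: every B inside N(I) has at least
   |B| neighbours in I, since otherwise I minus N(B) would have a larger
   surplus d. Together with the supermodularity of d this shows that for a
   critical independent S the set I + (S - N(I)) is again critical and
   independent, so maximality of I puts every such S inside X = I + N(I).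
   The Hall condition also bounds independent sets of G[X] by |I| and
   surpluses in G[X] by d_G(I); hence every maximum critical independent set
   of G is one of G[X], and both inclusions follow. *)

Section Neighbourhoods.
Variables (T : finType) (e : rel T).

Lemma nbhdP (V Y : {set T}) x :
  reflect (x \in V /\ exists2 y, y \in Y & e y x) (x \in nbhd e V Y).
Proof.
rewrite inE; apply: (iffP andP) => [[xV /existsP[y /andP[yY eyx]]]|[xV [y yY eyx]]].
  by split=> //; exists y.
by split=> //; apply/existsP; exists y; apply/andP.
Qed.

Lemma nbhd_restrict (V Y : {set T}) : nbhd e V Y = nbhd e [set: T] Y :&: V.
Proof. by apply/setP=> x; rewrite !inE ?andbT andbC. Qed.

Lemma nbhdS (V A B : {set T}) : A \subset B -> nbhd e V A \subset nbhd e V B.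
Proof.
move=> sAB; apply/subsetP=> x /nbhdP[xV [y yA eyx]].
by apply/nbhdP; split=> //; exists y; first exact: (subsetP sAB).
Qed.

Lemma nbhdU (V A B : {set T}) :
  nbhd e V (A :|: B) = nbhd e V A :|: nbhd e V B.
Proof.
apply/setP=> x; rewrite !inE -andb_orr; congr (_ && _).
apply/existsP/orP=> [[y]|[]/existsP[y /andP[yAB eyx]]].
  rewrite inE => /andP[/orP[yA|yB] eyx]; [left|right];
  by apply/existsP; exists y; rewrite ?yA ?yB.
all: by exists y; rewrite inE yAB ?orbT.
Qed.

Lemma independentP (V S : {set T}) :
  reflect (S \subset V /\ {in S &, forall x y, ~~ e x y}) (independent e V S).
Proof.
apply: (iffP andP) => [[sSV /forall_inP indS]|[sSV indS]]; split=> //.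
  by move=> x y xS yS; exact: (forall_inP (indS x xS) y yS).
by apply/forall_inP=> x xS; apply/forall_inP=> y yS; exact: indS.
Qed.

Lemma critical_indepP (V S : {set T}) :
  reflect (independent e V S /\
           forall Y : {set T}, Y \subset V -> (dH e V Y <= dH e V S)%R)
          (critical_indep e V S).
Proof.
apply: (iffP andP) => [[indS /forallP critS]|[indS critS]]; split=> //.
  by move=> Y; apply/implyP.
by apply/forallP=> Y; apply/implyP; exact: critS.
Qed.

Lemma dH_supermodular (V A B : {set T}) :
  (dH e V A + dH e V B <= dH e V (A :|: B) + dH e V (A :&: B))%R.
Proof.
have sNAB : nbhd e V (A :&: B) \subset nbhd e V A :&: nbhd e V B.
  by rewrite subsetI !nbhdS ?subsetIl ?subsetIr.
have := subset_leq_card sNAB; have := cardsUI A B.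
have := cardsUI (nbhd e V A) (nbhd e V B).
rewrite /dH nbhdU; lia.
Qed.

End Neighbourhoods.

Section CriticalIndependentSet.
Variables (T : finType) (e : rel T).
Hypothesis e_sym : symmetric e.

Local Notation N Y := (nbhd e [set: T] Y).
Local Notation dG := (dH e [set: T]).

Variable I : {set T}.
Hypothesis indI : {in I &, forall x y, ~~ e x y}.
Hypothesis critI : forall Y : {set T}, (dG Y <= dG I)%R.

Lemma disjoint_nbhd_indep : N I :&: I = set0.
Proof.
apply/setP=> x; rewrite in_setI in_set0 andbC.
apply/negP=> /andP[xI /nbhdP[_ [y yI eyx]]].
by move: (indI yI xI); rewrite eyx.
Qed.

Lemma crit_hall (B : {set T}) : B \subset N I -> #|B| <= #|N B :&: I|.
Proof.
move=> sBNI.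
have sub : N (I :\: N B) \subset N I :\: B.
  apply/subsetP=> x /nbhdP[_ [y]]; rewrite inE => /andP[yNB yI] eyx.
  rewrite inE; apply/andP; split; last by apply/nbhdP; split=> //; exists y.
  apply: contra yNB => xB; apply/nbhdP; split=> //; exists x => //.
  by rewrite e_sym.
have := critI (I :\: N B); have := subset_leq_card sub.
have := cardsID (N B) I; have := cardsID B (N I).
rewrite (setIidPr sBNI) setIC /dH; lia.
Qed.

Lemma indep_card_le_crit (Y : {set T}) :
  Y \subset I :|: N I -> {in Y &, forall x y, ~~ e x y} -> #|Y| <= #|I|.
Proof.
move=> sYX indY.
set A := Y :&: I; set B := Y :&: N I.
have AUB : A :|: B = Y by rewrite -setIUr; apply/setIidPl.
have disj : A :&: (N B :&: I) = set0.
  apply/setP=> x; rewrite !in_setI in_set0; apply/negP.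
  case/andP=> /andP[xY _] /andP[/nbhdP[_ [y]]].
  rewrite in_setI => /andP[yY _] eyx _.
  by move: (indY y x yY xY); rewrite eyx.
have sI : A :|: (N B :&: I) \subset I by rewrite subUset !subsetIr.
have := subset_leq_card sI; have := cardsUI A (N B :&: I).
have := crit_hall (subsetIr Y (N I)); have := cardsUI A B.
by rewrite AUB disj cards0 -/B; lia.
Qed.

Lemma dH_induced_le_crit (Y : {set T}) :
  Y \subset I :|: N I -> (dH e (I :|: N I) Y <= dG I)%R.
Proof.
move=> sYX.
set A := Y :&: I; set B := Y :&: N I.
have AUB : A :|: B = Y by rewrite -setIUr; apply/setIidPl.
have sNY : N A :|: (N B :&: I) \subset nbhd e (I :|: N I) Y.
  rewrite (nbhd_restrict e (I :|: N I)); apply/subsetP=> x.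
  rewrite in_setU !in_setI in_setU => /orP[xNA|/andP[xNB ->]].
    rewrite (subsetP (nbhdS _ _ (subsetIl Y I)) x xNA).
    by rewrite (subsetP (nbhdS _ _ (subsetIr Y I)) x xNA) orbT.
  by rewrite (subsetP (nbhdS _ _ (subsetIl Y (N I))) x xNB).
have disj : N A :&: (N B :&: I) = set0.
  apply/eqP; rewrite -subset0 -disjoint_nbhd_indep setIA setSI //.
  by rewrite subIset // nbhdS ?subsetIr.
have := critI A; have := subset_leq_card sNY.
have := cardsUI (N A) (N B :&: I).
have := crit_hall (subsetIr Y (N I)); have := cardsUI A B.
by rewrite AUB disj cards0 -/B /dH; lia.
Qed.

(* The vertices of S already adjacent to I are matched into I by Hall's
   condition, so trading them for their partners does not decrease d. *)
Lemma dH_setU_le_augment (S : {set T}) :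
  (dG (S :|: I) <= dG (I :|: (S :\: N I)))%R.
Proof.
set J := I :|: (S :\: N I); set S1 := S :&: N I.
have sSI : S :|: I \subset J :|: S1.
  apply/subsetP=> x; rewrite !(in_setU, in_setD, in_setI).
  by case: (x \in I) (x \in S) (x \in N I) => [] [] [].
have disj : N J :&: (N S1 :&: I) = set0.
  apply/setP=> x; rewrite !in_setI in_set0; apply/negP.
  case/andP=> /nbhdP[_ [y yJ eyx]] /andP[_ xI].
  move: yJ; rewrite in_setU in_setD => /orP[yI|/andP[yNI _]].
    by move: (indI yI xI); rewrite eyx.
  by move/negP: yNI; apply; apply/nbhdP; split=> //; exists x; rewrite // e_sym.
have sN : N J :|: (N S1 :&: I) \subset N (S :|: I).
  have sJ : J \subset S :|: I.
    by rewrite subUset subsetUr subDset subsetU // subsetUl orbT.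
  have sS1 : S1 \subset S :|: I by rewrite subIset // subsetUl.
  by rewrite subUset (nbhdS _ _ sJ) subIset // (nbhdS _ _ sS1).
have := subset_leq_card sN; have := cardsUI (N J) (N S1 :&: I).
have := subset_leq_card sSI; have := cardsUI J S1.
have := crit_hall (subsetIr S (N I)).
by rewrite disj cards0 -/S1 /dH; lia.
Qed.

Hypothesis maxI : forall S : {set T}, critical_indep e [set: T] S -> #|S| <= #|I|.

(* Otherwise I :|: (S :\: N I) is a larger critical independent set. *)
Lemma crit_indep_sub_closure (S : {set T}) :
  critical_indep e [set: T] S -> S \subset I :|: N I.
Proof.
case/critical_indepP=> /independentP[_ indS] critS.
set J := I :|: (S :\: N I).
have dI_le_dSI : (dG I <= dG (S :|: I))%R.
  have := dH_supermodular e [set: T] S I.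
  have := critS I (subsetT I); have := critI (S :&: I); lia.
have dI_le_dJ := Order.le_trans dI_le_dSI (dH_setU_le_augment S).
have critJ : critical_indep e [set: T] J.
  apply/critical_indepP; split=> [|Y _]; last exact: Order.le_trans (critI Y) _.
  apply/independentP; split; first exact: subsetT.
  have notadj x y : x \in I -> y \notin N I -> ~~ e x y.
    by move=> xI; apply: contra => exy; apply/nbhdP; split=> //; exists x.
  move=> x y; rewrite !(in_setU, in_setD).
  case/orP=> [xI|/andP[xNI xS]]; case/orP=> [yI|/andP[yNI yS]].
  - exact: indI.
  - exact: notadj.
  - by rewrite e_sym; apply: notadj.
  - exact: indS.
have eIJ : I = J by apply/eqP; rewrite eqEcard subsetUl maxI.
apply/subsetP=> x xS; rewrite in_setU; case xNI: (x \in N I); first by rewrite orbT.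
by rewrite eIJ in_setU in_setD xS xNI orbT.
Qed.

Lemma max_crit_indep_induced (S : {set T}) :
  max_critical_indep e [set: T] S -> max_critical_indep e (I :|: N I) S.
Proof.
case/andP=> cS /forall_inP maxS.
have sSX := crit_indep_sub_closure cS.
case/critical_indepP: cS => /independentP[_ indS] critS.
have leIS : #|I| <= #|S|.
  apply: maxS; apply/critical_indepP; split=> [|Y _]; last exact: critI.
  by apply/independentP; split; first exact: subsetT.
apply/andP; split.
  apply/critical_indepP; split; first exact/independentP.
  move=> Y sYX; have := dH_induced_le_crit sYX.
  have : #|nbhd e (I :|: N I) S| <= #|N S|.
    by apply: subset_leq_card; rewrite nbhd_restrict subsetIl.
  have := critS I (subsetT I); rewrite /dH; lia.
apply/forall_inP=> S' /critical_indepP[/independentP[sS'X indS'] _].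
exact: leq_trans (indep_card_le_crit sS'X indS') leIS.
Qed.

End CriticalIndependentSet.

Theorem lemma2p2 (T : finType) (e : rel T)
  (e_sym : symmetric e) (e_irr : irreflexive e)
  (I : {set T}) (hI : max_critical_indep e [set: T] I) :
  let X := I :|: nbhd e [set: T] I in
  diadem e [set: T] \subset diadem e X /\
  nucleus e X \subset nucleus e [set: T].
Proof.
move=> X; case/andP: (hI) => cI /forall_inP maxI.
case/critical_indepP: cI => /independentP[_ indI] critI.
have induced :=
  max_crit_indep_induced e_sym indI (fun Y => critI Y (subsetT Y)) maxI.
split; apply/subsetP=> v; rewrite !inE.
  by case/existsP=> S /andP[maxS vS]; apply/existsP; exists S; rewrite induced.
by case/andP=> _ /forall_inP inS; apply/forall_inP=> S /induced; exact: inS.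
Qed.
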